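(* For every forest $T$ and every integer $k\geq 3$, $\sigma(T)=\tau_1(T^{(k)})$. Equivalently, $\sigma(T)$ is the minimum size of a set $Y$ such that $T^{(k)}$ is isomorphic to a subhypergraph of $\{\{y\}\cup Z': y\in Y,\ Z'\subseteq Z,\ |Z'|=k-1\}$ for some set $Z$ disjoint from $Y$.
   Context: For a graph $H$ and integer $k\geq 2$, the $k$-expansion $H^{(k)}$ is the $k$-uniform hypergraph obtained by replacing each edge $xy$ of $H$ by a $k$-set $E_{xy}$ consisting of $x,y$ and $k-2$ new vertices, where the sets $E_{xy}\setminus\{x,y\}$ are pairwise disjoint for distinct edges and disjoint from $V(H)$. For a forest $T$, $\sigma(T):=\min\{|X|+e(T\setminus X): X\subseteq V(T)\text{ independent in }T\}$, where $T\setminus X$ is obtained by deleting the vertices of $X$ and all incident edges and $e(\cdot)$ counts edges. A set $Y$ is a 1-cross-cut of a family $\mathcal C$ of sets if $|Y\cap E|=1$ for every $E\in\mathcal C$; $\tau_1(\mathcal C)$ is the minimum size of a 1-cross-cut of $\mathcal C$ (and $\infty$ if none exists). *)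

From mathcomp Require Import all_boot.
Set Implicit Arguments. Unset Strict Implicit. Unset Printing Implicit Defensive.

Definition simple_graph (T : finType) (e : rel T) : Prop :=
  symmetric e /\ irreflexive e.

Definition forest (T : finType) (e : rel T) : Prop :=
  simple_graph e /\
  forall c : seq T, uniq c -> 2 < size c -> ~~ cycle e c.

Definition edges (T : finType) (e : rel T) : {set {set T}} :=
  [set [set x; y] | x in T, y in T & e x y].

Definition independent (T : finType) (e : rel T) (X : {set T}) : bool :=
  [forall x in X, forall y in X, ~~ e x y].

Definition edges_outside (T : finType) (e : rel T) (X : {set T}) : nat :=
  #|[set s in edges e | [disjoint s & X]]|.

(* sigma(T) = min over independent X of |X| + e(T\X).  X = set0 is always
   independent and has value #|edges e|, so using it as the neutral element
   gives the exact minimum. *)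
Definition sigma (T : finType) (e : rel T) : nat :=
  \big[minn/#|edges e|]_(X : {set T} | independent e X)
     (#|X| + edges_outside e X).

(* Vertex type: original vertices (inl) plus, for each
   2-set s and each i < k-2, a new vertex inr (s, i).  Only the new vertices
   whose s is an edge of T occur in hyperedges; the others are isolated. *)
Definition exp_vtx (T : finType) (k : nat) : finType :=
  (T + ({set T} * 'I_(k - 2)))%type.

Definition exp_edge (T : finType) (k : nat) (s : {set T}) : {set exp_vtx T k} :=
  [set inl x | x in s] :|: [set inr (s, i) | i : 'I_(k - 2)].

Definition expansion (T : finType) (e : rel T) (k : nat) : {set {set exp_vtx T k}} :=
  [set exp_edge k s | s in edges e].

(* 1-cross-cuts and tau_1 (None encodes infinity). *)
Definition cross1 (V : finType) (C : {set {set V}}) (Y : {set V}) : bool :=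
  [forall E in C, #|Y :&: E| == 1].

Definition tau1 (V : finType) (C : {set {set V}}) : option nat :=
  if [exists Y, cross1 C Y]
  then Some (\big[minn/#|V|]_(Y : {set V} | cross1 C Y) #|Y|)
  else None.

From mathcomp Require Import all_boot.
Set Implicit Arguments. Unset Strict Implicit. Unset Printing Implicit Defensive.

(* The two quantities are minima over different families, and we compare them
   by translating members of one family into members of the other.
   - From a 1-cross-cut Y of T^(k) to an independent set: the trace
     X = V(T) \cap Y is independent (an edge inside X would meet Y twice), and
     every edge of T avoiding X must meet Y in one of its k-2 >= 1 private new
     vertices, so |X| + e(T \ X) <= |Y|.
   - From an independent set X to a 1-cross-cut: every edge meets X in at most
     one vertex, so X together with one private new vertex of each edge
     avoiding X is a 1-cross-cut of size |X| + e(T \ X). *)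

Lemma bigmin_le (I : finType) (P : pred I) (F : I -> nat) (a : nat) (j : I) :
  P j -> \big[minn/a]_(i | P i) F i <= F j.
Proof.
move=> Pj; rewrite -big_filter.
have : j \in filter P (index_enum I) by rewrite mem_filter Pj mem_index_enum.
elim: (filter _ _) => // x r IH; rewrite inE big_cons => /orP [/eqP <- | /IH].
  exact: geq_minl.
by move=> le_rj; rewrite geq_min le_rj orbT.
Qed.

Lemma le_bigmin (I : finType) (P : pred I) (F : I -> nat) (a m : nat) :
  m <= a -> (forall i, P i -> m <= F i) -> m <= \big[minn/a]_(i | P i) F i.
Proof. by move=> ma mF; elim/big_ind: _ => // x y; rewrite leq_min => -> ->. Qed.

Lemma bigmin_le_bigmin (I J : finType) (P : pred I) (Q : pred J)
    (F : I -> nat) (G : J -> nat) (a b : nat) :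
  (exists2 j, Q j & G j <= a) ->
  (forall i, P i -> exists2 j, Q j & G j <= F i) ->
  \big[minn/b]_(j | Q j) G j <= \big[minn/a]_(i | P i) F i.
Proof.
move=> [j0 Qj0 Gj0] dom; apply: le_bigmin.
  exact: leq_trans (bigmin_le _ _ Qj0) Gj0.
by move=> i /dom [j Qj GjF]; exact: leq_trans (bigmin_le _ _ Qj) GjF.
Qed.

Section Expansion.

Variables (T : finType) (e : rel T) (k : nat).

Local Notation V := (exp_vtx T k).

Lemma edgesP (s : {set T}) :
  reflect (exists x y, e x y /\ s = [set x; y]) (s \in edges e).
Proof.
apply: (iffP imset2P) => [[x y _]|[x [y [exy ->]]]].
  by rewrite inE => exy ->; exists x, y.
by exists x y; rewrite ?inE.
Qed.

Lemma in_exp_edge_l (s : {set T}) (z : T) :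
  (inl z \in exp_edge k s) = (z \in s).
Proof.
rewrite /exp_edge inE mem_imset; last exact: inl_inj.
by case: (z \in s) => //=; apply/negP => /imsetP [].
Qed.

Lemma in_exp_edge_r (s t : {set T}) (i : 'I_(k - 2)) :
  (inr (t, i) \in exp_edge k s) = (t == s).
Proof.
rewrite /exp_edge inE; apply/orP/eqP => [[/imsetP [] | /imsetP [j _ [-> _]]] //|->].
by right; apply: imset_f.
Qed.

Definition outside_edges (X : {set T}) : {set {set T}} :=
  [set s in edges e | [disjoint s & X]].

Lemma edges_outside0 : edges_outside e set0 = #|edges e|.
Proof.
by apply: eq_card => s; rewrite inE -setI_eq0 setI0 eqxx andbT.
Qed.

Definition trace (Y : {set V}) : {set T} := [set x | inl x \in Y].

(* A 1-cross-cut cannot contain both ends of an edge. *)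
Lemma trace_independent (Y : {set V}) :
  irreflexive e -> cross1 (expansion e k) Y -> independent e (trace Y).
Proof.
move=> e_irr /forall_inP cut; apply/forall_inP => x; rewrite inE => xY.
apply/forall_inP => y; rewrite inE => yY; apply/negP => exy.
have sE : [set x; y] \in edges e by apply/edgesP; exists x, y.
have /eqP meet1 := cut _ (imset_f (exp_edge k) sE).
have : #|[set (inl x : V); inl y]| <= #|Y :&: exp_edge k [set x; y]|.
  apply/subset_leq_card/subsetP => v; rewrite in_set2.
  by case/orP => /eqP ->; rewrite in_setI ?xY ?yY in_exp_edge_l !inE eqxx ?orbT.
rewrite meet1 cards2; case: eqP => // -[x_eq_y].
by rewrite x_eq_y e_irr in exy.
Qed.

Lemma cross_hits_new_vertex (Y : {set V}) (s : {set T}) :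
  cross1 (expansion e k) Y -> s \in outside_edges (trace Y) ->
  exists i, inr (s, i) \in Y.
Proof.
move=> /forall_inP cut; rewrite inE => /andP [sE avoid].
have /cards1P [w Yw] := cut _ (imset_f (exp_edge k) sE).
have : w \in Y :&: exp_edge k s by rewrite Yw set11.
rewrite in_setI; case: w {Yw} => [z | [t i]] /andP [wY].
  rewrite in_exp_edge_l => zs.
  by move/disjointFr: avoid => /(_ z zs); rewrite inE wY.
by rewrite in_exp_edge_r => /eqP ts; exists i; rewrite -ts.
Qed.

Lemma trace_value_le (Y : {set V}) :
  cross1 (expansion e k) Y ->
  #|trace Y| + edges_outside e (trace Y) <= #|Y|.
Proof.
(* Split Y into its original vertices, which are inl @: trace Y, and its new
   vertices, which the map (s, i) |-> s sends onto every edge avoiding X. *)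
move=> cut; set orig : {set V} := [set inl x | x : T].
pose edge_of (v : V) := if v is inr p then p.1 else set0.
rewrite -(cardsID orig Y); apply: leq_add.
  rewrite -(card_imset (trace Y) (@inl_inj T ({set T} * 'I_(k - 2)))).
  apply/subset_leq_card/subsetP.
  by move=> _ /imsetP [x + ->]; rewrite !inE => ->; rewrite imset_f.
apply: leq_trans (leq_imset_card edge_of _); apply/subset_leq_card/subsetP.
move=> s /(cross_hits_new_vertex cut) [i siY]; apply/imsetP; exists (inr (s, i)) => //.
by rewrite !inE siY andbT; apply/negP => /imsetP [].
Qed.

Lemma edge_meets_independent (X : {set T}) (s : {set T}) (z : T) :
  independent e X -> s \in edges e -> z \in s :&: X -> s :&: X = [set z].
Proof.
move=> /forall_inP indep /edgesP [x [y [exy ->]]] zsX.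
have nonadj a b : a \in X -> b \in X -> ~~ e a b.
  by move=> aX; move/forall_inP: (indep a aX); apply.
apply/setP => w; rewrite in_set1; apply/idP/eqP => [|->] //.
move: zsX; rewrite !inE => /andP [zxy zX] /andP [wxy wX].
case/orP: zxy => /eqP zE; case/orP: wxy => /eqP wE; subst z w => //.
  by move: (nonadj _ _ zX wX); rewrite exy.
by move: (nonadj _ _ wX zX); rewrite exy.
Qed.

Definition cut_of (i0 : 'I_(k - 2)) (X : {set T}) : {set V} :=
  [set inl x | x in X] :|: [set inr (s, i0) | s in outside_edges X].

Lemma inl_in_inl (A : {pred T}) (z : T) :
  (inl z \in [set (inl x : V) | x in A]) = (z \in A).
Proof. by rewrite mem_imset //; exact: inl_inj. Qed.

Lemma inr_in_inl (A : {pred T}) (p : {set T} * 'I_(k - 2)) :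
  (inr p \in [set (inl x : V) | x in A]) = false.
Proof. by apply/negP => /imsetP []. Qed.

Lemma inl_in_inr (A : {pred {set T}}) (i0 : 'I_(k - 2)) (z : T) :
  (inl z \in [set (inr (t, i0) : V) | t in A]) = false.
Proof. by apply/negP => /imsetP []. Qed.

Lemma inr_in_inr (A : {pred {set T}}) (i0 i : 'I_(k - 2)) (t : {set T}) :
  (inr (t, i) \in [set (inr (u, i0) : V) | u in A]) = (t \in A) && (i == i0).
Proof.
apply/imsetP/andP => [[u uA [-> ->]] | [tA /eqP ->]]; first by [].
by exists t.
Qed.

Lemma cut_of_meet (i0 : 'I_(k - 2)) (X : {set T}) (s : {set T}) :
  cut_of i0 X :&: exp_edge k s =
  [set inl x | x in s :&: X] :|: [set inr (t, i0) | t in outside_edges X :&: [set s]].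
Proof.
apply/setP => -[z | [t i]]; rewrite in_setI.
  by rewrite in_exp_edge_l !in_setU !inl_in_inl !inl_in_inr !orbF inE andbC.
rewrite in_exp_edge_r !in_setU !inr_in_inl !inr_in_inr /= !inE.
by case: (t =P s) => [-> | _]; rewrite ?andbF ?andbT.
Qed.

(* cut_of meets each E_s exactly once: in its unique vertex of X if s meets X
   (by independence), and in its chosen new vertex otherwise. *)
Lemma cut_of_cross (i0 : 'I_(k - 2)) (X : {set T}) :
  independent e X -> cross1 (expansion e k) (cut_of i0 X).
Proof.
move=> indep; apply/forall_inP => _ /imsetP [s sE ->].
rewrite cut_of_meet cardsU card_imset; last exact: inl_inj.
have -> : [set inl x | x in s :&: X] :&: [set inr (t, i0) | t in outside_edges X :&: [set s]]
    = set0 :> {set V}.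
  by apply/setP => v; rewrite !inE; apply/andP => -[/imsetP [x _ ->] /imsetP []].
rewrite cards0 subn0 card_imset; last by move=> u w [].
case: (set_0Vmem (s :&: X)) => [sX0 | [z zsX]].
  have sO : s \in outside_edges X by rewrite inE sE -setI_eq0 sX0 eqxx.
  by rewrite sX0 cards0 (setIidPr _) ?sub1set ?cards1.
rewrite (edge_meets_independent indep sE zsX) cards1.
suff -> : outside_edges X :&: [set s] = set0 by rewrite cards0.
apply/setP => t; rewrite !inE; apply/andP => -[/andP [_ avoid] /eqP ts]; subst t.
by move: zsX; rewrite in_setI => /andP [/(disjointFr avoid) ->].
Qed.

Lemma cut_of_card (i0 : 'I_(k - 2)) (X : {set T}) :
  #|cut_of i0 X| <= #|X| + edges_outside e X.
Proof. by apply: leq_trans (leq_card_setU _ _) _; rewrite leq_add ?leq_imset_card. Qed.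

End Expansion.

Theorem mainTheorem5 (T : finType) (e : rel T) (k : nat) :
  forest e -> 3 <= k -> tau1 (expansion e k) = Some (sigma e).
Proof.
case=> [[_ e_irr] _] k3.
have k2 : 0 < k - 2 by rewrite subn_gt0.
pose i0 : 'I_(k - 2) := Ordinal k2.
have indep0 : independent e set0 by apply/forall_inP => x; rewrite inE.
have cut0 := cut_of_cross i0 indep0.
have cut_exists : [exists Y, cross1 (expansion e k) Y].
  by apply/existsP; exists (cut_of e i0 set0).
rewrite /tau1 cut_exists; congr Some.
(* tau_1 <= sigma via cut_of, and sigma <= tau_1 via trace; the empty
   independent set and its cut bound the two default values. *)
apply/eqP; rewrite eqn_leq; apply/andP; split; apply: bigmin_le_bigmin.
- exists (cut_of e i0 set0) => //.
  by rewrite (leq_trans (cut_of_card e i0 set0)) // cards0 edges_outside0.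
- by move=> X indep; exists (cut_of e i0 X); [exact: cut_of_cross | exact: cut_of_card].
- exists (trace (cut_of e i0 set0)); first exact: trace_independent e_irr cut0.
  exact: leq_trans (trace_value_le cut0) (max_card _).
- by move=> Y cut; exists (trace Y); [exact: trace_independent e_irr cut | exact: trace_value_le].
Qed.
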